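(* There exist an environment $E$ and a total preorder $\succeq$ on $\Pi^E$ such that $\succeq\in\mathrm{Ord}_{\mathrm{LAR}}(E)$ but $\succeq\notin\mathrm{Ord}_{\mathrm{ONMR}}(E)$.
   Context: An environment is a tuple $E=(\mathcal S,\mathcal A,\mathcal T,\mathcal I)$ where $\mathcal S,\mathcal A$ are finite nonempty sets, $\mathcal T:\mathcal S\times\mathcal A\to\Delta(\mathcal S)$ and $\mathcal I\in\Delta(\mathcal S)$. A policy is a map $\pi:\mathcal S\to\Delta(\mathcal A)$ (stationary, possibly stochastic); $\Pi^E$ denotes the set of all policies. A trajectory $\xi=(s_0,a_0,s_1,a_1,\dots)$ is generated under $\pi$ by $s_0\sim\mathcal I$, $a_t\sim\pi(s_t)$, $s_{t+1}\sim\mathcal T(s_t,a_t)$; $\mathbb E^\pi_\xi$ denotes expectation under this distribution. An objective-specification formalism $X$ assigns to each environment $E$ a set of objective specifications, each inducing a total preorder $\succeq$ on $\Pi^E$; $\mathrm{Ord}_X(E)$ is the set of total preorders so induced. A specification defining a scalar $J:\Pi^E\to\mathbb R$ induces $\pi_1\succeq\pi_2\iff J(\pi_1)\ge J(\pi_2)$. LAR: specification $(\mathcal R)$, $\mathcal R:\mathcal S\times\mathcal A\times\mathcal S\to\mathbb R$, $J(\pi)=\lim_{N\to\infty}\frac1N\mathbb E^\pi_\xi[\sum_{t=0}^{N-1}\mathcal R(s_t,a_t,s_{t+1})]$. ONMR: specification $(\mathcal R,f,\gamma)$ with $\mathcal R:\mathcal S\times\mathcal A\times\mathcal S\to\mathbb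 R$, $f:\mathbb R\to\mathbb R$, $\gamma\in[0,1)$; $J(\pi)=f\big(\mathbb E^\pi_\xi[\sum_{t=0}^\infty\gamma^t\mathcal R(s_t,a_t,s_{t+1})]\big)$. *)

From mathcomp Require Import all_boot all_order all_algebra.
From mathcomp Require Import all_classical all_reals all_analysis.
Set Implicit Arguments. Unset Strict Implicit. Unset Printing Implicit Defensive.
Import Order.TTheory GRing.Theory Num.Theory numFieldNormedType.Exports.
Local Open Scope ring_scope.

Section RL.
Variable R : realType.

Definition is_dist (X : finType) (d : X -> R) : Prop :=
  (forall x, 0 <= d x) /\ \sum_(x : X) d x = 1.

Record env := Env {
  St : finType;
  Ac : finType;
  St_nonempty : (0 < #|{: St}|)%N;
  Ac_nonempty : (0 < #|{: Ac}|)%N;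
  Tr : St -> Ac -> St -> R;
  Init : St -> R;
  Tr_dist : forall s a, is_dist (Tr s a);
  Init_dist : is_dist Init }.

(* stationary stochastic policies: pi s a = pi(s)(a) *)
Definition policy (E : env) := St E -> Ac E -> R.
Definition is_policy (E : env) (pi : policy E) : Prop :=
  forall s, is_dist (pi s).

(* probability of the trajectory prefix s_0 a_0 s_1 ... a_{N-1} s_N *)
Definition prefix_prob (E : env) (pi : policy E) (N : nat)
    (s : {ffun 'I_N.+1 -> St E}) (a : {ffun 'I_N -> Ac E}) : R :=
  Init (s ord0) *
  \prod_(t < N) (pi (s (widen_ord (leqnSn N) t)) (a t) *
                 Tr (s (widen_ord (leqnSn N) t)) (a t) (s (lift ord0 t))).

(* E^pi_xi [ sum_{t<N} g t (s_t, a_t, s_{t+1}) ], computed on the law of the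
   length-N prefix of the trajectory *)
Definition exp_sum (E : env) (pi : policy E) (N : nat)
    (g : nat -> St E -> Ac E -> St E -> R) : R :=
  \sum_(s : {ffun 'I_N.+1 -> St E}) \sum_(a : {ffun 'I_N -> Ac E})
    prefix_prob pi s a *
    \sum_(t < N) g t (s (widen_ord (leqnSn N) t)) (a t) (s (lift ord0 t)).

Definition reward (E : env) := St E -> Ac E -> St E -> R.

Definition J_LAR (E : env) (Rw : reward E) (pi : policy E) : R :=
  limn (fun N : nat => N%:R^-1 * exp_sum pi N (fun _ => Rw)).

(* ONMR objective: f (E[sum_{t>=0} gamma^t R(s_t,a_t,s_{t+1})]), the expectation
   of the (bounded, absolutely convergent) series taken as the limit of the
   expectations of its partial sums *)
Definition J_ONMR (E : env) (Rw : reward E) (f : R -> R) (gamma : R)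
    (pi : policy E) : R :=
  f (limn (fun N : nat => exp_sum pi N (fun t s a s' => gamma ^+ t * Rw s a s'))).

Definition prel (E : env) := policy E -> policy E -> Prop.

Definition total_preorder_on (E : env) (ge : prel E) : Prop :=
  (forall p, is_policy p -> ge p p) /\
  (forall p q r, is_policy p -> is_policy q -> is_policy r ->
     ge p q -> ge q r -> ge p r) /\
  (forall p q, is_policy p -> is_policy q -> ge p q \/ ge q p).

Definition induced_by (E : env) (J : policy E -> R) (ge : prel E) : Prop :=
  forall p q, is_policy p -> is_policy q -> (ge p q <-> J q <= J p).

Definition in_Ord_LAR (E : env) (ge : prel E) : Prop :=
  exists Rw : reward E, induced_by (J_LAR Rw) ge.

Definition in_Ord_ONMR (E : env) (ge : prel E) : Prop :=
  exists (Rw : reward E) (f : R -> R) (gamma : R),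
    0 <= gamma < 1 /\ induced_by (J_ONMR Rw f gamma) ge.

End RL.

From mathcomp Require Import all_boot all_order all_algebra.
From mathcomp Require Import all_classical all_reals all_analysis.
From mathcomp Require Import ring lra.
Set Implicit Arguments. Unset Strict Implicit. Unset Printing Implicit Defensive.
Import Order.TTheory GRing.Theory Num.Theory numFieldNormedType.Exports.
Local Open Scope ring_scope.

(* In the two-state environment [commit_env], a policy is described by the
   probability x of leaving the start state for an absorbing state and the
   probability y of then playing the rewarded action.  Its long-run average
   reward is y, whatever x > 0.  For any reward and discount g, its discounted
   value is an explicit rational function V(x, y), and moving x slightly below 1
   can be compensated by a change of y ([commit_value_shift]).  So every V has a
   level set containing two policies with different y: any f o V ranks them
   equally, while the average reward strictly prefers one of them. *)

Section FfunRcons.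
Variable T : finType.

Definition ffun_rcons n (f : {ffun 'I_n -> T}) (x : T) : {ffun 'I_n.+1 -> T} :=
  [ffun i : 'I_n.+1 => if insub (val i) is Some j then f j else x].

Definition ffun_front n (g : {ffun 'I_n.+1 -> T}) : {ffun 'I_n -> T} :=
  [ffun j => g (widen_ord (leqnSn n) j)].

Lemma ffun_rcons_lt n f x (i : 'I_n.+1) (j : 'I_n) :
  val i = val j -> @ffun_rcons n f x i = f j.
Proof.
move=> eij; rewrite ffunE; case: insubP => [j' _ ej'|]; last by rewrite eij ltn_ord.
by congr (f _); apply: val_inj; rewrite ej' eij.
Qed.

Lemma ffun_rcons_last n f x (i : 'I_n.+1) : val i = n -> @ffun_rcons n f x i = x.
Proof. by move=> ein; rewrite ffunE; case: insubP => [j|] //; rewrite ein ltnn. Qed.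

Lemma ffun_rcons_front n (g : {ffun 'I_n.+1 -> T}) :
  ffun_rcons (ffun_front g) (g ord_max) = g.
Proof.
apply/ffunP => i; rewrite ffunE; case: insubP => [j _ ej|].
  by rewrite ffunE; congr (g _); apply: val_inj; rewrite /= ej.
move=> Hi; congr (g _); apply: val_inj => /=.
by have := ltn_ord i; rewrite ltnS leq_eqVlt (negPf Hi) orbF => /eqP.
Qed.

Lemma ffun_front_rcons n f x : ffun_front (@ffun_rcons n f x) = f.
Proof. by apply/ffunP => j; rewrite ffunE; apply: ffun_rcons_lt. Qed.

Lemma big_ffun_rcons (R : Type) (idx : R) (op : Monoid.com_law idx) n
    (F : {ffun 'I_n.+1 -> T} -> R) :
  \big[op/idx]_(g : {ffun 'I_n.+1 -> T}) F g =
  \big[op/idx]_(f : {ffun 'I_n -> T}) \big[op/idx]_(x : T) F (ffun_rcons f x).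
Proof.
rewrite pair_bigA /= (reindex (fun p : {ffun 'I_n -> T} * T => ffun_rcons p.1 p.2)) //=.
apply: onW_bij; exists (fun g => (ffun_front g, g ord_max)).
  by case=> f x /=; rewrite ffun_front_rcons ffun_rcons_last.
by move=> g /=; rewrite ffun_rcons_front.
Qed.

Lemma big_ffun_ord0 (R : Type) (idx : R) (op : Monoid.law idx)
    (F : {ffun 'I_0 -> T} -> R) (f0 : {ffun 'I_0 -> T}) :
  \big[op/idx]_(f : {ffun 'I_0 -> T}) F f = F f0.
Proof. by rewrite (big_pred1 f0) // => f; apply/esym/eqP/ffunP => -[]. Qed.

End FfunRcons.
Arguments ffun_rcons_lt {T n f x i} j.

Lemma big_steps_rcons (R : Type) (idx : R) (op : Monoid.law idx) (S A : finType)
    n (s : {ffun 'I_n.+1 -> S}) (a : {ffun 'I_n -> A}) x y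
    (F : nat -> S -> A -> S -> R) :
  \big[op/idx]_(t < n.+1) F t (ffun_rcons s x (widen_ord (leqnSn n.+1) t))
                            (ffun_rcons a y t) (ffun_rcons s x (lift ord0 t)) =
  op (\big[op/idx]_(t < n) F t (s (widen_ord (leqnSn n) t)) (a t) (s (lift ord0 t)))
     (F n (s ord_max) y x).
Proof.
rewrite big_ord_recr /=; congr (op _ _).
  apply: eq_bigr => t _.
  rewrite (ffun_rcons_lt (widen_ord (leqnSn n) t)) // (ffun_rcons_lt t) //.
  by rewrite (ffun_rcons_lt (lift ord0 t)).
by rewrite (ffun_rcons_lt ord_max) // !ffun_rcons_last.
Qed.

Section StateMarginals.
Variable R : realType.
Variable E : env R.
Variable pi : policy E.
Hypothesis pi_policy : is_policy pi.
Local Notation S := (St E).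
Local Notation A := (Ac E).

Definition prefix_mean N (H : {ffun 'I_N.+1 -> S} -> {ffun 'I_N -> A} -> R) : R :=
  \sum_(s : {ffun 'I_N.+1 -> S}) \sum_(a : {ffun 'I_N -> A}) prefix_prob pi s a * H s a.

Lemma prefix_meanD N (F G : {ffun 'I_N.+1 -> S} -> {ffun 'I_N -> A} -> R) :
  prefix_mean (fun s a => F s a + G s a) = prefix_mean F + prefix_mean G.
Proof.
rewrite /prefix_mean -big_split; apply: eq_bigr => s _.
by rewrite -big_split; apply: eq_bigr => a _; rewrite mulrDr.
Qed.

Lemma prefix_prob_rcons N (s : {ffun 'I_N.+1 -> S}) (a : {ffun 'I_N -> A}) x y :
  prefix_prob pi (ffun_rcons s x) (ffun_rcons a y) =
  prefix_prob pi s a * (pi (s ord_max) y * Tr (s ord_max) y x).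
Proof.
rewrite /prefix_prob (big_steps_rcons _ _ _ _ _
  (fun _ u v w => pi u v * Tr u v w)) (ffun_rcons_lt (@ord0 N)) //=.
by rewrite !mulrA.
Qed.

Lemma prefix_mean_rcons N (H : {ffun 'I_N.+2 -> S} -> {ffun 'I_N.+1 -> A} -> R) :
  prefix_mean H =
  prefix_mean (fun s a => \sum_y \sum_x pi (s ord_max) y * Tr (s ord_max) y x
                           * H (ffun_rcons s x) (ffun_rcons a y)).
Proof.
rewrite /prefix_mean big_ffun_rcons; apply: eq_bigr => s _.
under eq_bigr => x _ do rewrite big_ffun_rcons.
rewrite exchange_big; apply: eq_bigr => a _.
rewrite mulr_sumr exchange_big /=; apply: eq_bigr => y _.
rewrite mulr_sumr; apply: eq_bigr => x _.
by rewrite prefix_prob_rcons !mulrA.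
Qed.

Lemma sum_policy_Tr z : \sum_y \sum_x pi z y * Tr z y x = 1.
Proof.
have [_ <-] := pi_policy z; apply: eq_bigr => y _.
by rewrite -mulr_sumr; have [_ ->] := Tr_dist z y; rewrite mulr1.
Qed.

Definition state_prob t z := prefix_mean
  (fun (s : {ffun 'I_t.+1 -> S}) (_ : {ffun 'I_t -> A}) => (s ord_max == z)%:R).

Lemma prefix_mean_last N (h : S -> R) :
  prefix_mean (fun (s : {ffun 'I_N.+1 -> S}) (_ : {ffun 'I_N -> A}) => h (s ord_max)) =
  \sum_z state_prob N z * h z.
Proof.
have h_sum (s : {ffun 'I_N.+1 -> S}) : h (s ord_max) = \sum_z (s ord_max == z)%:R * h z.
  rewrite (bigD1 (s ord_max)) //= eqxx mul1r big1 ?addr0 //.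
  by move=> z /negPf; rewrite eq_sym => ->; rewrite mul0r.
rewrite /prefix_mean.
under eq_bigr => s _ do under eq_bigr => a _ do rewrite h_sum mulr_sumr.
under eq_bigr => s _ do rewrite exchange_big.
rewrite exchange_big; apply: eq_bigr => z _.
rewrite /state_prob /prefix_mean mulr_suml; apply: eq_bigr => s _.
by rewrite mulr_suml; apply: eq_bigr => a _; rewrite mulrA.
Qed.

Lemma state_prob0 z : state_prob 0 z = Init z.
Proof.
rewrite /state_prob /prefix_mean big_ffun_rcons (big_ffun_ord0 _ _ (ffun0 (card_ord 0))).
rewrite (bigD1 z) //= [X in _ + X]big1 ?addr0.
  rewrite (big_ffun_ord0 _ _ (ffun0 (card_ord 0))) /prefix_prob big_ord0 mulr1.
  by rewrite !ffun_rcons_last // eqxx mulr1.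
move=> x /negPf nx; rewrite big1 // => a _.
by rewrite ffun_rcons_last // nx mulr0.
Qed.

Lemma state_probS t z' :
  state_prob t.+1 z' = \sum_z state_prob t z * \sum_y pi z y * Tr z y z'.
Proof.
rewrite -prefix_mean_last /state_prob prefix_mean_rcons.
apply: eq_bigr => s _; apply: eq_bigr => a _; congr (_ * _); apply: eq_bigr => y _.
rewrite (bigD1 z') //= big1 ?addr0; first by rewrite ffun_rcons_last // eqxx mulr1.
by move=> x /negPf nx; rewrite ffun_rcons_last // nx mulr0.
Qed.

Lemma exp_sum_state_prob N g : exp_sum pi N g =
  \sum_(t < N) \sum_z state_prob t z *
     \sum_y \sum_x pi z y * Tr z y x * g (nat_of_ord t) z y x.
Proof.
elim: N => [|N IH].
  rewrite big_ord0 /exp_sum big1 // => s _; rewrite big1 // => a _.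
  by rewrite big_ord0 mulr0.
rewrite big_ord_recr /= -IH -prefix_mean_last.
rewrite [LHS](prefix_mean_rcons (fun s a => \sum_(t < N.+1)
  g t (s (widen_ord (leqnSn N.+1) t)) (a t) (s (lift ord0 t)))).
rewrite -prefix_meanD; apply: eq_bigr => s _; apply: eq_bigr => a _; congr (_ * _).
set past := \sum_(t < N) _.
transitivity (\sum_y \sum_x (pi (s ord_max) y * Tr (s ord_max) y x * past
                 + pi (s ord_max) y * Tr (s ord_max) y x * g N (s ord_max) y x)).
  by apply: eq_bigr => y _; apply: eq_bigr => x _; rewrite (big_steps_rcons +%R) mulrDr.
rewrite -[in RHS](mul1r past) -(sum_policy_Tr (s ord_max)) mulr_suml -big_split.
by apply: eq_bigr => y _; rewrite mulr_suml -big_split.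
Qed.

End StateMarginals.

Section CommitEnv.
Variable R : realType.

Definition coin (p : R) (b : bool) : R := if b then p else 1 - p.

Lemma coin_dist p : 0 <= p <= 1 -> is_dist (coin p).
Proof.
move=> /andP[p0 p1]; split; first by case; rewrite /coin ?subr_ge0.
by rewrite big_bool /= addrC subrK.
Qed.

Definition commit_tr (s a s' : bool) : R := if s' == s || a then 1 else 0.
Definition commit_init (s : bool) : R := if s then 0 else 1.

Lemma commit_tr_dist s a : is_dist (commit_tr s a).
Proof.
split; first by move=> s'; rewrite /commit_tr; case: ifP.
by rewrite big_bool /commit_tr; case: s; case: a; rewrite /= ?addr0 ?add0r.
Qed.

Lemma commit_init_dist : is_dist commit_init.
Proof. by split; [case | rewrite big_bool /= add0r]. Qed.

Lemma card_bool_gt0 : (0 < #|{: bool}|)%N.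
Proof. by rewrite card_bool. Qed.

(* Start in [false]; action [true] moves to the absorbing state [true]. *)
Definition commit_env : env R := Env card_bool_gt0 card_bool_gt0
  commit_tr_dist commit_init_dist.

Definition commit_policy (x y : R) : policy commit_env :=
  fun s => coin (if s then y else x).

Lemma is_policy_commit x y : 0 <= x <= 1 -> 0 <= y <= 1 -> is_policy (commit_policy x y).
Proof. by move=> hx hy []; apply: coin_dist. Qed.

Section CommitPolicy.
Variables x y : R.
Hypotheses (hx : 0 <= x <= 1) (hy : 0 <= y <= 1).
Local Notation p := (commit_policy x y).

Lemma commit_state_prob t :
  state_prob p t false = (1 - x) ^+ t /\ state_prob p t true = 1 - (1 - x) ^+ t.
Proof.
elim: t => [|t [IHf IHt]]; first by rewrite !state_prob0 /= expr0 subrr.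
rewrite !state_probS !big_bool /= IHf IHt /commit_policy /coin /commit_tr /= exprS.
by split; ring.
Qed.

Lemma exp_sum_commit N g : exp_sum p N g =
  \sum_(t < N) ((1 - x) ^+ t * ((1 - x) * g t false false false + x * g t false true true)
     + (1 - (1 - x) ^+ t) * (y * g t true true true + (1 - y) * g t true false true)).
Proof.
rewrite exp_sum_state_prob; last exact: is_policy_commit.
apply: eq_bigr => t _; rewrite big_bool /= addrC; have [-> ->] := commit_state_prob t.
by rewrite !big_bool /= /commit_policy /coin /commit_tr /=; ring.
Qed.

End CommitPolicy.
End CommitEnv.

Section CommitValues.
Local Open Scope classical_set_scope.
Variable R : realType.
Implicit Types (x y g : R) (Rw : reward (commit_env R)).

Definition stay_reward : reward (commit_env R) :=
  fun s a _ => if s && a then 1 else 0.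

Lemma J_LAR_commit x y : 0 < x <= 1 -> 0 <= y <= 1 ->
  J_LAR stay_reward (commit_policy x y) = y.
Proof.
move=> /andP[x0 x1] hy; have hx : 0 <= x <= 1 by rewrite x1 ltW.
have u1 : `|1 - x| < 1 by rewrite ger0_norm; lra.
have exp_sumE N : exp_sum (commit_policy x y) N (fun _ => stay_reward) =
    y * (N%:R - series (geometric 1 (1 - x)) N).
  rewrite exp_sum_commit // /series /= big_mkord.
  have -> : (N%:R : R) = \sum_(t < N) 1 by rewrite sumr_const card_ord.
  by rewrite -sumrB mulr_sumr; apply: eq_bigr => t _; rewrite /stay_reward /=; ring.
rewrite /J_LAR; apply: cvg_lim => //; rewrite -cvg_shiftS.
have geoS : (fun N => series (geometric 1 (1 - x)) N.+1) @ \oo --> 1 * (1 - (1 - x))^-1.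
  by rewrite (cvg_shiftS (series _)); exact: cvg_geometric_series.
(* [N.+1%:R^-1] is [harmonic N]; the bounded geometric part vanishes in the average. *)
have : (fun N => y - y * (harmonic N * series (geometric 1 (1 - x)) N.+1)) @ \oo -->
   (y - y * (0 * (1 * (1 - (1 - x))^-1))).
  exact: cvgB (cvg_cst y) (cvgM (cvg_cst y) (cvgM cvg_harmonic geoS)).
rewrite mul0r mulr0 subr0; apply: cvg_trans; apply: near_eq_cvg; near=> N.
rewrite /= exp_sumE; have hN : (N.+1%:R : R) != 0 by rewrite pnatr_eq0.
rewrite /harmonic; field; by rewrite addrC natr1.
Unshelve. all: by end_near. Qed.

Definition start_reward Rw x := (1 - x) * Rw false false false + x * Rw false true true.
Definition absorbed_reward Rw y := y * Rw true true true + (1 - y) * Rw true false true.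

Definition commit_value Rw g x y :=
  (start_reward Rw x - absorbed_reward Rw y) / (1 - g * (1 - x))
  + absorbed_reward Rw y / (1 - g).

Lemma J_ONMR_commit Rw f g x y : 0 <= x <= 1 -> 0 <= y <= 1 -> 0 <= g < 1 ->
  J_ONMR Rw f g (commit_policy x y) = f (commit_value Rw g x y).
Proof.
move=> hx hy /andP[g0 g1]; congr f.
have gx1 : `|g * (1 - x)| < 1.
  rewrite ger0_norm ?mulr_ge0 //; last lra.
  by apply: le_lt_trans g1; rewrite ler_piMr //; lra.
have exp_sumE N : exp_sum (commit_policy x y) N (fun t s a s' => g ^+ t * Rw s a s') =
    series (geometric (start_reward Rw x - absorbed_reward Rw y) (g * (1 - x))) N
    + series (geometric (absorbed_reward Rw y) g) N.
  rewrite exp_sum_commit // /series /= !big_mkord -big_split /=.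
  by apply: eq_bigr => t _; rewrite /start_reward /absorbed_reward exprMn; ring.
rewrite (funext exp_sumE); apply: cvg_lim => //.
by apply: cvgD; apply: cvg_geometric_series; rewrite // ger0_norm.
Qed.
End CommitValues.

Section Collision.
Variable R : realType.
Variables (Rw : reward (commit_env R)) (g : R).
Hypothesis g01 : 0 <= g < 1.
Local Notation r := (absorbed_reward Rw).
Local Notation V := (commit_value Rw g).
Local Notation gap y := ((1 - g) * Rw false true true - Rw false false false + g * r y).

Lemma commit_value_shift s y1 y2 : 0 <= s ->
  V (1 + s)^-1 y2 - V 1 y1 =
  (g * (r y2 - r y1) - s * (1 - g) * gap y1) / ((1 - g) * (1 + s - g * s)).
Proof.
move=> s0; have /andP[g0 g1] := g01.
rewrite /commit_value /start_reward /absorbed_reward; field.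
by rewrite !gt_eqF //; nra.
Qed.

Lemma commit_value_collision : exists x y1 y2,
  [/\ 0 < x <= 1, 0 <= y1 <= 1, 0 <= y2 <= 1, y1 != y2 & V 1 y1 = V x y2].
Proof.
have value_eq s y1 y2 : 0 <= s -> g * (r y2 - r y1) = s * (1 - g) * gap y1 ->
    V 1 y1 = V (1 + s)^-1 y2.
  by move=> s0 h; apply/esym/subr0_eq; rewrite commit_value_shift // h subrr mul0r.
have r_diff y1 y2 : r y2 - r y1 = (y2 - y1) * (Rw true true true - Rw true false true).
  by rewrite /absorbed_reward; ring.
pose k := g * (Rw true true true - Rw true false true).
have [k0|k0] := eqVneq k 0.
  (* The value does not depend on [y] along [x = 1]. *)
  exists 1, 0, 1; split; rewrite ?ler01 ?ltr01 ?lexx //; first by rewrite eq_sym oner_neq0.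
  have := value_eq 0 0 1 (lexx 0); rewrite addr0 invr1; apply.
  by rewrite r_diff subr0 mul1r -/k k0 !mul0r.
have [y1 [y1_range gap_y1]] : exists y1, 1/4 <= y1 <= 1/2 /\ gap y1 != 0.
  have [gap0|gap0] := eqVneq (gap (1/4)) 0; last by exists (1/4); split => //; lra.
  exists (1/2); split; first lra.
  (* [gap] is affine in [y] with slope [k]. *)
  apply: contra_neq k0 => gap1; move: gap0 gap1; rewrite /k /absorbed_reward; lra.
have [g0 g1] := andP g01.
pose Q := (1 - g) * gap y1 / k.
pose s := (4 * (`|Q| + 1))^-1.
have s_gt0 : 0 < s by rewrite invr_gt0 mulr_gt0 // ltr_pwDr.
have sQ_small : - (1/4) <= s * Q <= 1/4.
  have sQ1 : s * (4 * (`|Q| + 1)) = 1 by rewrite mulVf // gt_eqF // mulr_gt0 // ltr_pwDr.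
  have : - `|Q| <= Q <= `|Q| by rewrite -ler_norml.
  by move=> /andP[? ?]; apply/andP; split; nra.
have sQ0 : s * Q != 0.
  apply: mulf_neq0; first exact: lt0r_neq0.
  by apply: mulf_neq0; [apply: mulf_neq0; rewrite // subr_eq0 gt_eqF | rewrite invr_neq0].
exists (1 + s)^-1, y1, (y1 + s * Q); split.
- by rewrite invr_gt0 invf_le1; lra.
- lra.
- lra.
- by rewrite -subr_eq0 opprD addrA subrr sub0r oppr_eq0.
- apply: value_eq; first exact: ltW.
  rewrite r_diff (addrC y1) addrK.
  have -> : g * (s * Q * (Rw true true true - Rw true false true)) = s * Q * k by rewrite /k; ring.
  by rewrite /Q; field.
Qed.

End Collision.

Section InducedOrders.
Variables (R : realType) (E : env R).
Implicit Types (J : policy E -> R) (ge : prel E).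

Definition objective_order J : prel E := fun p q => J q <= J p.

Lemma objective_order_total J : total_preorder_on (objective_order J).
Proof.
split; [|split].
- by move=> p _; exact: lexx.
- by move=> p q r _ _ _ qp rq; exact: le_trans rq qp.
- by move=> p q _ _; apply/orP; rewrite orbC le_total.
Qed.

Lemma objective_order_induced J : induced_by J (objective_order J).
Proof. by []. Qed.

Lemma induced_by_eq J J' ge p q : induced_by J ge -> induced_by J' ge ->
  is_policy p -> is_policy q -> J' p = J' q -> J p = J q.
Proof.
move=> hJ hJ' hp hq eqJ'.
have Jqp : J q <= J p by apply/(hJ _ _ hp hq)/(hJ' _ _ hp hq); rewrite eqJ'.
have Jpq : J p <= J q by apply/(hJ _ _ hq hp)/(hJ' _ _ hq hp); rewrite eqJ'.
by apply/eqP; rewrite eq_le Jpq Jqp.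
Qed.

End InducedOrders.

Theorem mainTheorem12 (R : realType) :
  exists (E : env R) (ge : prel E),
    total_preorder_on ge /\ in_Ord_LAR ge /\ ~ in_Ord_ONMR ge.
Proof.
pose ge := objective_order (J_LAR (@stay_reward R)).
exists (commit_env R), ge; split; first exact: objective_order_total.
split; first by exists (@stay_reward R).
move=> [Rw [f [g [g01 ONMR]]]].
have [x [y1 [y2 [x01 y1_01 y2_01 y12 eqV]]]] := commit_value_collision Rw g01.
have one01 : 0 <= (1 : R) <= 1 by rewrite ler01 lexx.
have x01' : 0 <= x <= 1 by case/andP: x01 => /ltW -> ->.
have one01' : 0 < (1 : R) <= 1 by rewrite ltr01 lexx.
have P1 := is_policy_commit one01 y1_01; have P2 := is_policy_commit x01' y2_01.
apply/(negP y12)/eqP.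
rewrite -(J_LAR_commit one01' y1_01) -(J_LAR_commit x01 y2_01).
apply: (induced_by_eq (objective_order_induced _) ONMR P1 P2).
by rewrite !J_ONMR_commit // eqV.
Qed.
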